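(* Let $G=(U,V,E)$ be a bipartite graph and let $X \subseteq V$ be such that some minimum-cardinality vertex cover of $G$ contains $X$. Let $Y \subseteq V$. Then $G \setminus Y$ has a minimum-cardinality vertex cover containing $X \setminus Y$.
   Context: $G=(U,V,E)$ denotes a bipartite graph with vertex set $U\cup V$ and every edge having one end in $U$ and the other in $V$. $G\setminus Y$ denotes the graph obtained by deleting the vertices of $Y$. A vertex cover is a set of vertices incident to all edges. *)

From mathcomp Require Import all_boot.
Set Implicit Arguments. Unset Strict Implicit. Unset Printing Implicit Defensive.

(* A bipartite graph G = (U, V, E) is given by two finite vertex types U, V
   (the two sides, disjoint by construction) and an edge relation E : U -> V -> bool.
   We consider the induced subgraph on U ∪ W for W : {set V}
   (so G \ Y, for Y ⊆ V, is the case W = ~: Y). *)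

Definition is_vcover (U V : finType) (E : U -> V -> bool) (W : {set V})
  (A : {set U}) (B : {set V}) : Prop :=
  B \subset W /\ (forall u v, v \in W -> E u v -> (u \in A) || (v \in B)).

Definition is_min_vcover (U V : finType) (E : U -> V -> bool) (W : {set V})
  (A : {set U}) (B : {set V}) : Prop :=
  is_vcover E W A B /\
  (forall A' B', is_vcover E W A' B' -> #|A| + #|B| <= #|A'| + #|B'|).

From mathcomp Require Import all_boot.
From mathcomp Require Import zify.
Set Implicit Arguments. Unset Strict Implicit.

(* Uncrossing.  Let (A, B) be a minimum cover of the graph on U ∪ W and
   (A', B') a minimum cover of the subgraph on U ∪ W', with W' ⊆ W.  Then
   (A ∩ A', (B ∩ W') ∪ B') covers the subgraph and (A ∪ A', (B ∩ B') ∪ (B \ W'))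
   covers the graph, and the two new covers have total size #|A| + #|B| + #|A'| + #|B'|.
   Minimality of (A, B) bounds the second from below, so the first is a minimum
   cover of the subgraph; it contains B ∩ W'. *)

Lemma cards_uncross (T : finType) (W' B B' : {set T}) : B' \subset W' ->
  #|(B :&: W') :|: B'| + #|(B :&: B') :|: (B :\: W')| = #|B| + #|B'|.
Proof.
move=> sB'W'.
have capBB' : (B :&: W') :&: B' = B :&: B'.
  by rewrite -setIA (setIidPr sB'W').
have disjBB' : (B :&: B') :&: (B :\: W') = set0.
  apply/setP => v; rewrite !inE.
  case B'v: (v \in B'); last by rewrite andbF.
  by rewrite (subsetP sB'W' v B'v) /= andbF.
have := cardsUI (B :&: W') B'; have := cardsUI (B :&: B') (B :\: W').
have := cardsID W' B; rewrite capBB' disjBB' cards0; lia.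
Qed.

Section VertexCover.

Variables (U V : finType) (E : U -> V -> bool).

Definition vcoverb (W : {set V}) (A : {set U}) (B : {set V}) : bool :=
  (B \subset W) &&
  [forall u, forall v, (v \in W) && E u v ==> (u \in A) || (v \in B)].

Lemma vcoverP W A B : reflect (is_vcover E W A B) (vcoverb W A B).
Proof.
apply: (iffP andP) => [[sBW /forallP covAB] | [sBW covAB]]; split => //.
- by move=> u v Wv Euv; apply: (implyP (forallP (covAB u) v)); rewrite Wv Euv.
- by apply/forallP => u; apply/forallP => v; apply/implyP => /andP[]; apply: covAB.
Qed.

Lemma exists_min_vcover W : exists A B, is_min_vcover E W A B.
Proof.
have cov0 : vcoverb W setT set0.
  by apply/vcoverP; split=> [|u v _ _]; rewrite ?sub0set ?in_setT.
have [[A B] /vcoverP covAB minAB] := @arg_minnP _ (setT, set0)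
  (fun p => vcoverb W p.1 p.2) (fun p => #|p.1| + #|p.2|) cov0.
by exists A, B; split=> // A' B' /vcoverP covA'B'; apply: (minAB (A', B')).
Qed.

Variables (W W' : {set V}) (A A' : {set U}) (B B' : {set V}).
Hypotheses (sW'W : W' \subset W)
  (covAB : is_vcover E W A B) (covA'B' : is_vcover E W' A' B').

Lemma vcover_meet : is_vcover E W' (A :&: A') ((B :&: W') :|: B').
Proof.
case: covAB covA'B' => _ cAB [sB'W' cA'B']; split.
  by rewrite subUset subsetIr sB'W'.
move=> u v W'v Euv; rewrite !inE W'v andbT.
have := cAB u v (subsetP sW'W v W'v) Euv; have := cA'B' u v W'v Euv.
by case: (u \in A) (u \in A') (v \in B) (v \in B') => [] [] [] [].
Qed.

Lemma vcover_join : is_vcover E W (A :|: A') ((B :&: B') :|: (B :\: W')).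
Proof.
case: covAB covA'B' => sBW cAB [_ cA'B']; split.
  by rewrite subUset (subset_trans (subsetIl _ _) sBW)
             (subset_trans (subsetDl _ _) sBW).
move=> u v Wv Euv; rewrite !inE; have := cAB u v Wv Euv.
have [W'v | _] := boolP (v \in W'); last by case/orP=> ->; rewrite /= ?orbT.
have := cA'B' u v W'v Euv.
by case: (u \in A) (u \in A') (v \in B) (v \in B') => [] [] [] [].
Qed.

End VertexCover.

Lemma min_vcover_uncross (U V : finType) (E : U -> V -> bool) (W W' : {set V})
    (A A' : {set U}) (B B' : {set V}) :
  W' \subset W -> is_min_vcover E W A B -> is_min_vcover E W' A' B' ->
  is_min_vcover E W' (A :&: A') ((B :&: W') :|: B').
Proof.
move=> sW'W [covAB minAB] [covA'B' minA'B'].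
have size_join := minAB _ _ (vcover_join covAB covA'B').
have size_sum := cards_uncross B (proj1 covA'B').
have size_meet := cardsUI A A'.
split; first exact: vcover_meet sW'W covAB covA'B'.
by move=> A'' B'' /minA'B'; lia.
Qed.

Theorem lemma5 (U V : finType) (E : U -> V -> bool) (X Y : {set V}) :
  (exists (A : {set U}) (B : {set V}), is_min_vcover E setT A B /\ X \subset B) ->
  exists (A : {set U}) (B : {set V}),
    is_min_vcover E (~: Y) A B /\ (X :\: Y) \subset B.
Proof.
move=> [A [B [minAB sXB]]].
have [A' [B' minA'B']] := exists_min_vcover E (~: Y).
exists (A :&: A'), ((B :&: ~: Y) :|: B'); split.
  exact: min_vcover_uncross (subsetT _) minAB minA'B'.
by rewrite setDE subsetU // setSI.
Qed.
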